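(* In the setting described in the context, let $\Delta'$ be the orthogonal projector onto $\operatorname{span}\{\ket{\psi_x'}:f(x)=1\}$ and $R=2\Delta'-I$. If $\varepsilon\kappa<1/12$, then for every $x$ with $f(x)=0$, $\|(I+R)\ket{\phi_x'}\|\le 8\varepsilon(c+1)A\sqrt{\kappa}$.
   Context: Let $X\subseteq\{0,1\}^n$, $f:X\to\{0,1\}$, $c>0$, and let $\{\ket{v_{x,i}}\in\mathbb{R}^m\}_{x\in X,i\in[n]}$ be a real $f$-deciding vector set, i.e. $\sum_{i:x_i\ne y_i}\braket{v_{x,i}}{v_{y,i}}=1$ whenever $f(x)\ne f(y)$, with size $A=\max_x\sum_i\|\ket{v_{x,i}}\|^2$. Let $\mathcal{H}=\mathbb{R}\oplus(\mathbb{R}^n\otimes\mathbb{R}^m\otimes\mathbb{R}^2)$ with $\ket{\hat0}$ a unit vector spanning the first summand. For $f(x)=1$ let $\ket{\psi_x}=\frac{1}{\sqrt{\nu_x}}\big(\ket{\hat0}+\frac{1}{\sqrt{cA}}\sum_i\ket{i}\ket{v_{x,i}}\ket{x_i}\big)$ with $\nu_x$ chosen so $\|\ket{\psi_x}\|=1$; for $f(x)=0$ let $\ket{\phi_x}=\frac{1}{\sqrt{\mu_x}}\big(\ket{\hat0}-\sqrt{cA}\sum_i\ket{i}\ket{v_{x,i}}\ket{\bar x_i}\big)$ with $\mu_x$ chosen so $\|\ket{\phi_x}\|=1$, $\bar x_i=1-x_i$. Let $\kappa=\dim\operatorname{span}\{\ket{\psi_x}:f(x)=1\}$, $\{\ket{\zeta_j}\}_{j\in[\kappa]}$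 an orthonormal basis of it, with fixed real $\alpha_{j,x}$ such that $\ket{\zeta_j}=\sum_{x:f(x)=1}\alpha_{j,x}\ket{\psi_x}$. Let $\ket{C_{j,i,b}}=\sum_{x:f(x)=1,x_i=b}\frac{\alpha_{j,x}}{\sqrt{\nu_x}}\ket{v_{x,i}}$ and $V=\{\ket{C_{j,i,b}}\}_{j,i,b}\cup\{\ket{v_{y,i}}:f(y)=0,i\in[n]\}$. Let $\varepsilon>0$ and $S\in\mathbb{R}^{N\times m}$ satisfy $(1-\varepsilon)\|u-v\|^2\le\|Su-Sv\|^2\le(1+\varepsilon)\|u-v\|^2$ for all $u,v\in V\cup\{0\}$. Let $T=\ket{\hat0}\bra{\hat0}+I_n\otimes S\otimes I_2$ and $\ket{\psi_x'}=T\ket{\psi_x}$, $\ket{\phi_x'}=T\ket{\phi_x}$. *)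

From HB Require Import structures.
From mathcomp Require Import all_boot all_order all_algebra.
From mathcomp Require Import mxtens.
From mathcomp Require Import reals.
Set Implicit Arguments. Unset Strict Implicit. Unset Printing Implicit Defensive.
Import Order.TTheory GRing.Theory Num.Theory.
Local Open Scope ring_scope.

Definition bitstr (n : nat) := {ffun 'I_n -> bool}.

Section Defs.
Variable R : realType.

Definition dotv {k} (u w : 'cV[R]_k) : R := \sum_(i < k) u i 0 * w i 0.
Definition normv {k} (u : 'cV[R]_k) : R := Num.sqrt (dotv u u).

Definition ket {k} (i : 'I_k) : 'cV[R]_k := delta_mx i 0.
Definition ketb (b : bool) : 'cV[R]_2 := delta_mx (inord (nat_of_bool b) : 'I_2) 0.

(* H_d = R (+) (R^n (x) R^d (x) R^2), realised as R^(1 + n*d*2) *)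
Definition hat0 {n d} : 'cV[R]_(1 + n * d * 2) := col_mx 1%:M 0.
Definition tket {n d} (i : 'I_n) (v : 'cV[R]_d) (b : bool)
  : 'cV[R]_(1 + n * d * 2) := col_mx 0 (ket i *t v *t ketb b).

Definition Tmap {n m N} (S : 'M[R]_(N, m))
  : 'M[R]_(1 + n * N * 2, 1 + n * m * 2) :=
  block_mx 1%:M 0 0 (1%:M *t S *t 1%:M).

Definition deciding {n m} (X : {set bitstr n}) (f : bitstr n -> bool)
  (v : bitstr n -> 'I_n -> 'cV[R]_m) : Prop :=
  forall x y, x \in X -> y \in X -> f x != f y ->
    \sum_(i < n | x i != y i) dotv (v x i) (v y i) = 1.

Definition vsize {n m} (X : {set bitstr n}) (v : bitstr n -> 'I_n -> 'cV[R]_m) : R :=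
  \big[Num.max/0]_(x in X) \sum_(i < n) normv (v x i) ^+ 2.

Definition psi_un {n m} (c A : R) (v : bitstr n -> 'I_n -> 'cV[R]_m) x
  : 'cV[R]_(1 + n * m * 2) :=
  hat0 + (Num.sqrt (c * A))^-1 *: \sum_(i < n) tket i (v x i) (x i).
Definition phi_un {n m} (c A : R) (v : bitstr n -> 'I_n -> 'cV[R]_m) x
  : 'cV[R]_(1 + n * m * 2) :=
  hat0 - Num.sqrt (c * A) *: \sum_(i < n) tket i (v x i) (~~ x i).

Definition nu {n m} c A v x := dotv (@psi_un n m c A v x) (psi_un c A v x).
Definition mu {n m} c A v x := dotv (@phi_un n m c A v x) (phi_un c A v x).
Definition psi {n m} c A v x := (Num.sqrt (@nu n m c A v x))^-1 *: psi_un c A v x.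
Definition phi {n m} c A v x := (Num.sqrt (@mu n m c A v x))^-1 *: phi_un c A v x.

Definition psi_span {n m} (X : {set bitstr n}) (f : bitstr n -> bool) c A v
  : {vspace 'cV[R]_(1 + n * m * 2)} :=
  <<[seq @psi n m c A v x | x <- enum X & f x]>>%VS.

Definition orth_proj {k} (W : {vspace 'cV[R]_k}) (P : 'M[R]_k) : Prop :=
  forall u, P *m u \in W /\ forall w, w \in W -> dotv w (u - P *m u) = 0.

End Defs.

From HB Require Import structures.
From mathcomp Require Import all_boot all_order all_algebra.
From mathcomp Require Import mxtens reals.
From mathcomp Require Import ring lra.
Set Implicit Arguments. Unset Strict Implicit. Unset Printing Implicit Defensive.
Import Order.TTheory GRing.Theory Num.Theory.
Local Open Scope ring_scope.

(* Every vector of H is a |0^> + sum_{i,b} |i>|g_{i,b}>|b> ([hvec]), and T only replaces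
   g by S g, so <T u, T w> - <u, w> is a sum of terms <S g, S g'> - <g, g'>, each at most
   2 eps (|g|^2 + |g'|^2) when g, g' are multiples of vectors of V.  Since the zeta_j are
   orthonormal and <psi_x, phi_y> = 0 (the deciding property), the Gram matrix of the
   T zeta_j is within 4 eps of the identity and |<T zeta_j, T phi_y>| <= B := 2 eps (c + 1) A.
   The projection p of T phi_y lies in span{T zeta_j}; for p = sum_j beta_j T zeta_j we get
   |p|^2 = <p, T phi_y> <= B sum_j |beta_j| and |p|^2 >= sum_j beta_j^2 - 4 eps (sum_j |beta_j|)^2,
   which together with Cauchy-Schwarz and 12 eps kappa < 1 give |p|^2 <= 3/2 kappa B^2.
   Finally (I + R) T phi_y = 2 p. *)

Lemma sumr_delta (R : nzRingType) (I : finType) (i : I) (F : I -> R) :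
  \sum_j (i == j)%:R * F j = F i.
Proof.
rewrite (bigD1 i) //= big1 ?addr0 ?eqxx ?mul1r // => j /negbTE.
by rewrite eq_sym => ->; rewrite mul0r.
Qed.

Section InnerProduct.
Variable R : realType.
Implicit Types k : nat.

Lemma dotvE k (u w : 'cV[R]_k) : dotv u w = (u^T *m w) 0 0.
Proof. by rewrite /dotv !mxE; apply: eq_bigr => i _; rewrite mxE. Qed.

Lemma dotvC k (u w : 'cV[R]_k) : dotv u w = dotv w u.
Proof. by apply: eq_bigr => i _; rewrite mulrC. Qed.

Lemma dotvDl k (u u' w : 'cV[R]_k) : dotv (u + u') w = dotv u w + dotv u' w.
Proof. by rewrite /dotv -big_split; apply: eq_bigr => i _; rewrite mxE mulrDl. Qed.

Lemma dotvZl k a (u w : 'cV[R]_k) : dotv (a *: u) w = a * dotv u w.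
Proof. by rewrite /dotv mulr_sumr; apply: eq_bigr => i _; rewrite mxE mulrA. Qed.

Lemma dotv0l k (w : 'cV[R]_k) : dotv 0 w = 0.
Proof. by rewrite -(scale0r 0) dotvZl mul0r. Qed.

Lemma dotvBl k (u u' w : 'cV[R]_k) : dotv (u - u') w = dotv u w - dotv u' w.
Proof. by rewrite dotvDl -scaleN1r dotvZl mulN1r. Qed.

Lemma dotvDr k (u w w' : 'cV[R]_k) : dotv u (w + w') = dotv u w + dotv u w'.
Proof. by rewrite dotvC dotvDl !(dotvC _ u). Qed.

Lemma dotvZr k a (u w : 'cV[R]_k) : dotv u (a *: w) = a * dotv u w.
Proof. by rewrite dotvC dotvZl dotvC. Qed.

Lemma dotvBr k (u w w' : 'cV[R]_k) : dotv u (w - w') = dotv u w - dotv u w'.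
Proof. by rewrite dotvC dotvBl !(dotvC _ u). Qed.

Lemma dotv0r k (w : 'cV[R]_k) : dotv w 0 = 0.
Proof. by rewrite dotvC dotv0l. Qed.

Lemma dotv_suml k (I : Type) (r : seq I) (P : pred I) (F : I -> 'cV[R]_k) w :
  dotv (\sum_(i <- r | P i) F i) w = \sum_(i <- r | P i) dotv (F i) w.
Proof. exact: (big_morph (fun u => dotv u w) (fun u u' => dotvDl u u' w) (dotv0l w)). Qed.

Lemma dotv_sumr k (I : Type) (r : seq I) (P : pred I) (F : I -> 'cV[R]_k) w :
  dotv w (\sum_(i <- r | P i) F i) = \sum_(i <- r | P i) dotv w (F i).
Proof. by rewrite dotvC dotv_suml; apply: eq_bigr => i _; rewrite dotvC. Qed.

Lemma dotv_ge0 k (u : 'cV[R]_k) : 0 <= dotv u u.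
Proof. by rewrite sumr_ge0 // => i _; rewrite -expr2 sqr_ge0. Qed.

Lemma dotv_eq0 k (u : 'cV[R]_k) : (dotv u u == 0) = (u == 0).
Proof.
apply/idP/eqP => [|->]; last by rewrite dotv0l.
rewrite psumr_eq0 => [/allP u0|i _]; last by rewrite -expr2 sqr_ge0.
apply/matrixP => i j; rewrite [j]ord1 mxE.
by have /implyP/(_ isT) := u0 i (mem_index_enum _); rewrite mulf_eq0 orbb => /eqP.
Qed.

Lemma sqr_normv k (u : 'cV[R]_k) : normv u ^+ 2 = dotv u u.
Proof. by rewrite sqr_sqrtr // dotv_ge0. Qed.

Lemma normv_le k (u : 'cV[R]_k) r : 0 <= r -> dotv u u <= r ^+ 2 -> normv u <= r.
Proof. by move=> r0 ur; rewrite /normv -(ger0_norm r0) -sqrtr_sqr ler_sqrt ?sqr_ge0. Qed.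

Lemma dotv_ket k (i i' : 'I_k) : dotv (ket R i) (ket R i') = (i == i')%:R.
Proof.
rewrite /dotv (bigD1 i) //= big1 => [|l /negbTE li]; last by rewrite !mxE li mul0r.
by rewrite !mxE !eqxx /= mul1r addr0 andbT eq_sym.
Qed.

Lemma dotv_ketb b b' : dotv (ketb R b) (ketb R b') = (b == b')%:R.
Proof.
rewrite /ketb -/(ket R _) dotv_ket.
by case: b; case: b'; rewrite ?eqxx // -(inj_eq val_inj) /= !inordK.
Qed.

End InnerProduct.

Section Tensor.
Variable R : pzRingType.

Lemma tensmxDl m1 n1 p q (A B : 'M[R]_(m1, n1)) (C : 'M[R]_(p, q)) :
  (A + B) *t C = A *t C + B *t C.
Proof. by apply/matrixP => i j; rewrite !mxE mulrDl. Qed.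

Lemma tensmxDr m1 n1 p q (A : 'M[R]_(m1, n1)) (B C : 'M[R]_(p, q)) :
  A *t (B + C) = A *t B + A *t C.
Proof. by apply/matrixP => i j; rewrite !mxE mulrDr. Qed.

Lemma tensmxZl m1 n1 p q a (A : 'M[R]_(m1, n1)) (B : 'M[R]_(p, q)) :
  (a *: A) *t B = a *: (A *t B).
Proof. by apply/matrixP => i j; rewrite !mxE mulrA. Qed.

End Tensor.

Lemma tensmxZr (R : comPzRingType) m1 n1 p q a (A : 'M[R]_(m1, n1)) (B : 'M[R]_(p, q)) :
  A *t (a *: B) = a *: (A *t B).
Proof. by apply/matrixP => i j; rewrite !mxE mulrCA. Qed.

Section HilbertSpace.
Variables (R : realType) (n : nat).

Lemma tketD d (i : 'I_n) (u w : 'cV[R]_d) b : tket i (u + w) b = tket i u b + tket i w b.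
Proof. by rewrite /tket tensmxDr tensmxDl add_col_mx addr0. Qed.

Lemma tketZ d (i : 'I_n) a (u : 'cV[R]_d) b : tket i (a *: u) b = a *: tket i u b.
Proof. by rewrite /tket tensmxZr tensmxZl scale_col_mx scaler0. Qed.

Lemma tket0 d (i : 'I_n) b : tket i (0 : 'cV[R]_d) b = 0.
Proof. by rewrite /tket tensmx0 tens0mx col_mx0. Qed.

Lemma tket_sum d (i : 'I_n) b (I : Type) (r : seq I) (P : pred I) (F : I -> 'cV[R]_d) :
  tket i (\sum_(x <- r | P x) F x) b = \sum_(x <- r | P x) tket i (F x) b.
Proof. exact: (big_morph (fun u => tket i u b) (fun u w => tketD i u w b) (tket0 d i b)). Qed.

Lemma dotv_hat0 d : dotv (@hat0 R n d) (hat0 R) = 1.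
Proof. by rewrite dotvE /hat0 tr_col_mx mul_row_col trmx1 mul1mx trmx0 mul0mx addr0 mxE. Qed.

Lemma dotv_hat0_tket d (i : 'I_n) (u : 'cV[R]_d) b : dotv (hat0 R) (tket i u b) = 0.
Proof. by rewrite dotvE /hat0 /tket tr_col_mx mul_row_col mulmx0 trmx0 mul0mx addr0 mxE. Qed.

Lemma dotv_tens3 p d (a a' : 'cV[R]_p) (u w : 'cV[R]_d) (e e' : 'cV[R]_2) :
  dotv (a *t u *t e) (a' *t w *t e') = dotv a a' * dotv u w * dotv e e'.
Proof.
rewrite dotvE.
have -> : (a *t u *t e)^T *m (a' *t w *t e') = a^T *m a' *t (u^T *m w) *t (e^T *m e').
  by rewrite !trmx_tens !tensmx_mul.
have E (M : 'M[R]_1) i j : M i j = M 0 0 by rewrite [i]ord1 [j]ord1.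
rewrite !dotvE; move: (a^T *m a') (u^T *m w) (e^T *m e') => P Q Z.
by rewrite !mxE (E P) (E Q) (E Z).
Qed.

Lemma dotv_tket d (i i' : 'I_n) (u w : 'cV[R]_d) b b' :
  dotv (tket i u b) (tket i' w b') = (i == i')%:R * ((b == b')%:R * dotv u w).
Proof.
rewrite dotvE /tket tr_col_mx mul_row_col trmx0 mul0mx add0r.
(* The tensor has 1 * 1 * 1 columns, which only converts to 1, so rewriting cannot
   see through it; here and in [Tmap_tket] we go through an explicitly typed term. *)
transitivity (dotv (ket R i *t u *t ketb R b) (ket R i' *t w *t ketb R b')).
  by rewrite dotvE.
by rewrite dotv_tens3 dotv_ket dotv_ketb -mulrA (mulrC (dotv u w)).
Qed.

Lemma Tmap_hat0 m N (S : 'M[R]_(N, m)) : @Tmap R n m N S *m hat0 R = hat0 R.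
Proof. by rewrite /Tmap /hat0 mul_block_col !mul0mx mulmx0 !addr0 mul1mx. Qed.

Lemma Tmap_tket m N (S : 'M[R]_(N, m)) (i : 'I_n) u b :
  @Tmap R n m N S *m tket i u b = tket i (S *m u) b.
Proof.
rewrite /Tmap /tket mul_block_col !mulmx0 mul0mx !add0r; congr col_mx.
have E : (1%:M *t S *t 1%:M) *m (ket R i *t u *t ketb R b) = ket R i *t (S *m u) *t ketb R b.
  by rewrite !tensmx_mul !mul1mx.
exact: E.
Qed.

Definition hvec d (a : R) (g : 'I_n -> bool -> 'cV[R]_d) : 'cV[R]_(1 + n * d * 2) :=
  a *: hat0 R + \sum_i \sum_b tket i (g i b) b.

Lemma eq_hvec d a (g g' : 'I_n -> bool -> 'cV[R]_d) :
  (forall i b, g i b = g' i b) -> hvec a g = hvec a g'.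
Proof. by move=> gg'; congr (_ + _); apply: eq_bigr => i _; apply: eq_bigr => b _; rewrite gg'. Qed.

Lemma dotv_hvec d a a' (g g' : 'I_n -> bool -> 'cV[R]_d) :
  dotv (hvec a g) (hvec a' g') = a * a' + \sum_i \sum_b dotv (g i b) (g' i b).
Proof.
rewrite /hvec dotvDl dotvZl dotvDr dotvZr dotv_hat0 mulr1 dotv_sumr.
rewrite big1 ?mulr0 ?addr0; last first.
  by move=> i _; rewrite dotv_sumr big1 // => b _; rewrite dotv_hat0_tket.
rewrite dotv_suml; congr (_ + _); apply: eq_bigr => i _.
rewrite dotv_suml; apply: eq_bigr => b _.
rewrite dotvDr dotvZr dotvC dotv_hat0_tket mulr0 add0r dotv_sumr.
under eq_bigr do rewrite dotv_sumr; under eq_bigr do under eq_bigr do rewrite dotv_tket.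
by under eq_bigr do rewrite -mulr_sumr sumr_delta; rewrite sumr_delta.
Qed.

Lemma scale_hvec d c a (g : 'I_n -> bool -> 'cV[R]_d) :
  c *: hvec a g = hvec (c * a) (fun i b => c *: g i b).
Proof.
rewrite /hvec scalerDr scalerA scaler_sumr; congr (_ + _); apply: eq_bigr => i _.
by rewrite scaler_sumr; apply: eq_bigr => b _; rewrite tketZ.
Qed.

Lemma sum_hvec d (I : Type) (r : seq I) (P : pred I) (a : I -> R)
    (g : I -> 'I_n -> bool -> 'cV[R]_d) :
  \sum_(x <- r | P x) hvec (a x) (g x) =
  hvec (\sum_(x <- r | P x) a x) (fun i b => \sum_(x <- r | P x) g x i b).
Proof.
rewrite /hvec big_split /= -scaler_suml; congr (_ + _).
rewrite exchange_big; apply: eq_bigr => i _; rewrite exchange_big; apply: eq_bigr => b _.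
by rewrite tket_sum.
Qed.

Lemma hvec_tket d a (h : 'I_n -> 'cV[R]_d) (t : 'I_n -> bool) :
  a *: hat0 R + \sum_i tket i (h i) (t i) = hvec a (fun i b => (t i == b)%:R *: h i).
Proof.
congr (_ + _); apply: eq_bigr => i _.
rewrite (bigD1 (t i)) //= eqxx scale1r big1 ?addr0 // => b /negbTE.
by rewrite eq_sym => ->; rewrite scale0r tket0.
Qed.

Lemma Tmap_hvec m N (S : 'M[R]_(N, m)) a g :
  @Tmap R n m N S *m hvec a g = hvec a (fun i b => S *m g i b).
Proof.
rewrite mulmxDr -scalemxAr Tmap_hat0 mulmx_sumr; congr (_ + _).
by apply: eq_bigr => i _; rewrite mulmx_sumr; apply: eq_bigr => b _; rewrite Tmap_tket.
Qed.

Lemma dotv_Tmap_hvecB m N (S : 'M[R]_(N, m)) a a' g g' :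
  dotv (@Tmap R n m N S *m hvec a g) (@Tmap R n m N S *m hvec a' g') -
    dotv (hvec a g) (hvec a' g') =
  \sum_i \sum_b (dotv (S *m g i b) (S *m g' i b) - dotv (g i b) (g' i b)).
Proof.
rewrite !Tmap_hvec !dotv_hvec opprD addrACA subrr add0r -sumrB.
by under eq_bigr do rewrite -sumrB.
Qed.

Lemma sum_dotv_le_hvec d a (g : 'I_n -> bool -> 'cV[R]_d) :
  \sum_i \sum_b dotv (g i b) (g i b) <= dotv (hvec a g) (hvec a g).
Proof. by rewrite dotv_hvec lerDr -expr2 sqr_ge0. Qed.

End HilbertSpace.

Section PsiPhi.
Variables (R : realType) (n m : nat) (c A : R) (v : bitstr n -> 'I_n -> 'cV[R]_m).
Local Notation s := (Num.sqrt (c * A)).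

Lemma psi_un_hvec x :
  psi_un c A v x = hvec 1 (fun i b => ((x i == b)%:R / s) *: v x i).
Proof.
rewrite /psi_un -[hat0 R]scale1r scaler_sumr.
under eq_bigr do rewrite -tketZ.
by rewrite hvec_tket; apply: eq_hvec => i b; rewrite scalerA mulrC.
Qed.

Lemma phi_un_hvec y :
  phi_un c A v y = hvec 1 (fun i b => (- ((~~ y i == b)%:R * s)) *: v y i).
Proof.
rewrite /phi_un -[hat0 R]scale1r scaler_sumr -sumrN.
under eq_bigr do rewrite -scaleNr -tketZ.
by rewrite hvec_tket; apply: eq_hvec => i b; rewrite scalerA mulrN mulrC.
Qed.

Lemma mu_ge1 y : 1 <= mu c A v y.
Proof.
rewrite /mu phi_un_hvec dotv_hvec mulr1 lerDl.
by apply: sumr_ge0 => i _; apply: sumr_ge0 => b _; apply: dotv_ge0.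
Qed.

Lemma phi_hvec y :
  phi c A v y = hvec (Num.sqrt (mu c A v y))^-1
    (fun i b => ((Num.sqrt (mu c A v y))^-1 * - ((~~ y i == b)%:R * s)) *: v y i).
Proof. by rewrite /phi phi_un_hvec scale_hvec mulr1; apply: eq_hvec => i b; rewrite scalerA. Qed.

(* With [w := alpha j] this is the paper's |C_{j,i,b}>. *)
Definition Cvec (X : {set bitstr n}) (f : bitstr n -> bool) (w : bitstr n -> R) i b
    : 'cV[R]_m :=
  \sum_(x in X | f x && (x i == b)) (w x / Num.sqrt (nu c A v x)) *: v x i.

Lemma sum_psi_hvec (X : {set bitstr n}) (f : bitstr n -> bool) (w : bitstr n -> R) :
  \sum_(x in X | f x) w x *: psi c A v x =
  hvec (\sum_(x in X | f x) w x / Num.sqrt (nu c A v x))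
       (fun i b => s^-1 *: Cvec X f w i b).
Proof.
under eq_bigr do rewrite /psi psi_un_hvec !scale_hvec mulr1.
rewrite sum_hvec; apply: eq_hvec => i b.
rewrite scaler_sumr big_mkcond [RHS]big_mkcond /=; apply: eq_bigr => x _.
case: (_ \in _); case: (f x); case: (x i == b); rewrite /= ?mul0r ?scale0r ?scaler0 //.
by rewrite !scalerA; congr (_ *: _); ring.
Qed.

Lemma dotv_psi_phi (X : {set bitstr n}) (f : bitstr n -> bool) x y :
  0 < c * A -> deciding X f v -> x \in X -> y \in X -> f x -> ~~ f y ->
  dotv (psi c A v x) (phi c A v y) = 0.
Proof.
move=> cA_gt0 dec xX yX fx fy; rewrite dotvZl dotvZr psi_un_hvec phi_un_hvec dotv_hvec.
have s_neq0 : s != 0 by rewrite gt_eqF // sqrtr_gt0.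
suff -> : \sum_i \sum_b dotv ((x i == b)%:R / s *: v x i) (- ((~~ y i == b)%:R * s) *: v y i)
    = - \sum_(i | x i != y i) dotv (v x i) (v y i).
  by rewrite dec ?fx ?(negbTE fy) // mulr1 subrr !mulr0.
rewrite big_mkcond [in RHS]big_mkcond -sumrN; apply: eq_bigr => i _ /=.
by rewrite big_bool !dotvZl !dotvZr; case: (x i); case: (y i) => /=; field.
Qed.

End PsiPhi.

Section VectorSetSize.
Variables (R : realType) (n m : nat) (X : {set bitstr n}) (v : bitstr n -> 'I_n -> 'cV[R]_m).

Lemma vsize_ge0 : 0 <= vsize X v.
Proof.
apply: (big_ind (fun z : R => 0 <= z)) => // [a b a0 b0|x _]; first by rewrite le_max a0.
by apply: sumr_ge0 => i _; apply: sqr_ge0.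
Qed.

Lemma sum_dotv_le_vsize y : y \in X -> \sum_i dotv (v y i) (v y i) <= vsize X v.
Proof.
move=> yX; rewrite /vsize (bigD1 y) //= le_max; apply/orP; left.
by under [X in _ <= X]eq_bigr do rewrite sqr_normv.
Qed.

Lemma vsize_gt0 (f : bitstr n -> bool) x y :
  deciding X f v -> x \in X -> y \in X -> f x != f y -> 0 < vsize X v.
Proof.
move=> dec xX yX fxy; rewrite lt_def vsize_ge0 andbT; apply/eqP => A0.
have sum0 : \sum_i dotv (v x i) (v x i) = 0.
  apply/le_anti/andP; split; first by rewrite -[X in _ <= X]A0 sum_dotv_le_vsize.
  by apply: sumr_ge0 => i _; apply: dotv_ge0.
have vx0 i : v x i = 0.
  by apply/eqP; rewrite -dotv_eq0 (psumr_eq0P _ sum0) // => j _; apply: dotv_ge0.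
have := dec x y xX yX fxy; rewrite big1 => [/eqP|i _]; last by rewrite vx0 dotv0l.
by rewrite eq_sym oner_eq0.
Qed.

End VectorSetSize.

Definition near_isometry (R : realType) m N (S : 'M[R]_(N, m)) (eps : R) (u w : 'cV[R]_m) :=
  (1 - eps) * normv (u - w) ^+ 2 <= normv (S *m u - S *m w) ^+ 2 /\
  normv (S *m u - S *m w) ^+ 2 <= (1 + eps) * normv (u - w) ^+ 2.

Lemma near_isometry_dotv (R : realType) m N (S : 'M[R]_(N, m)) eps (u w : 'cV[R]_m) :
  0 <= eps -> near_isometry S eps u 0 -> near_isometry S eps w 0 ->
  near_isometry S eps u w ->
  `|dotv (S *m u) (S *m w) - dotv u w| <= 2 * eps * (dotv u u + dotv w w).
Proof.
rewrite /near_isometry !sqr_normv !mulmx0 !subr0 -mulmxBr => eps0 [u1 u2] [w1 w2].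
rewrite mulmxBr !dotvBl !dotvBr (dotvC w u) (dotvC (S *m w) (S *m u)) => -[d1 d2].
have := dotv_ge0 (u + w); rewrite !dotvDl !dotvDr (dotvC w u) => uw.
have eps_bound : eps * (dotv u u - dotv u w - (dotv u w - dotv w w)) <=
                 eps * (2 * (dotv u u + dotv w w)).
  by apply: ler_wpM2l; lra.
by rewrite ler_norml; apply/andP; split; nra.
Qed.

Section GramProjection.
Variable R : realType.

Lemma sqr_sum_le k (a : 'I_k -> R) : (\sum_j a j) ^+ 2 <= k%:R * \sum_j a j ^+ 2.
Proof.
have sq : \sum_(j < k) \sum_(l < k) a j ^+ 2 = k%:R * \sum_j a j ^+ 2.
  by under eq_bigr do rewrite sumr_const card_ord; rewrite sumrMnl mulr_natl.
have sq' : \sum_(j < k) \sum_(l < k) a l ^+ 2 = k%:R * \sum_j a j ^+ 2.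
  by rewrite sumr_const card_ord mulr_natl.
have prod : (\sum_j a j) ^+ 2 = \sum_(j < k) \sum_(l < k) a j * a l.
  by rewrite expr2 mulr_suml; apply: eq_bigr => j _; rewrite mulr_sumr.
have expand : \sum_(j < k) \sum_(l < k) (a j - a l) ^+ 2 =
    \sum_(j < k) \sum_(l < k) a j ^+ 2 + \sum_(j < k) \sum_(l < k) a l ^+ 2
    - 2%:R * \sum_(j < k) \sum_(l < k) a j * a l.
  rewrite mulr_sumr -big_split -sumrB /=; apply: eq_bigr => j _.
  by rewrite mulr_sumr -big_split -sumrB /=; apply: eq_bigr => l _; ring.
have : 0 <= \sum_(j < k) \sum_(l < k) (a j - a l) ^+ 2.
  by do 2 (apply: sumr_ge0 => ? _); apply: sqr_ge0.
rewrite expand sq sq' -prod; lra.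
Qed.

Lemma quad_form_ge k (beta : 'I_k -> R) (G : 'I_k -> 'I_k -> R) delta :
  (forall j l, `|G j l - (j == l)%:R| <= delta) ->
  \sum_j beta j ^+ 2 - delta * (\sum_j `|beta j|) ^+ 2 <=
  \sum_j \sum_l beta j * beta l * G j l.
Proof.
move=> G_near1.
have -> : \sum_j \sum_l beta j * beta l * G j l =
    \sum_j beta j ^+ 2 + \sum_j \sum_l beta j * beta l * (G j l - (j == l)%:R).
  rewrite -big_split /=; apply: eq_bigr => j _.
  transitivity (\sum_l ((j == l)%:R * (beta j * beta l) +
                        beta j * beta l * (G j l - (j == l)%:R))).
    by apply: eq_bigr => l _; ring.
  by rewrite big_split /= sumr_delta -expr2.
rewrite expr2 mulr_suml mulr_sumr -sumrN lerD2l; apply: ler_sum => j _.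
rewrite mulr_sumr mulr_sumr -sumrN; apply: ler_sum => l _.
have : `|beta j * beta l * (G j l - (j == l)%:R)| <= delta * (`|beta j| * `|beta l|).
  by rewrite !normrM mulrC ler_wpM2r ?mulr_ge0.
by rewrite ler_norml => /andP[].
Qed.

Lemma gram_bound_arith (D s Q B kap delta : R) :
  D <= s * B -> Q - delta * s ^+ 2 <= D -> s ^+ 2 <= kap * Q ->
  3%:R * delta * kap <= 1 -> 0 <= s -> 0 <= B -> 0 <= kap -> 0 <= delta ->
  D <= 3%:R / 2%:R * kap * B ^+ 2.
Proof.
move=> DsB QD sQ small s0 B0 kap0 delta0.
have s_le : 2%:R / 3%:R * s ^+ 2 <= kap * s * B.
  have : kap * (Q - delta * s ^+ 2) <= kap * D by apply: ler_wpM2l.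
  have : kap * D <= kap * (s * B) by apply: ler_wpM2l.
  have : delta * kap * s ^+ 2 <= 1 / 3%:R * s ^+ 2 by apply: ler_wpM2r; [apply: sqr_ge0 | lra].
  nra.
have [s_eq0 | s_neq0] := eqVneq s 0.
  move: DsB; rewrite s_eq0 mul0r => D0; apply: le_trans D0 _.
  by rewrite mulr_ge0 ?sqr_ge0 // mulr_ge0 // divr_ge0.
have {}s_le : s <= 3%:R / 2%:R * kap * B.
  have s_gt0 : 0 < s by rewrite lt_def s_neq0.
  by rewrite -(ler_pM2l s_gt0); nra.
by apply: le_trans DsB _; rewrite expr2 mulrA ler_wpM2r.
Qed.

Lemma span_orthonormal k (W : {vspace 'cV[R]_k}) kap (Z : kap.-tuple 'cV[R]_k) :
  {subset Z <= W} -> (forall j l, dotv (tnth Z j) (tnth Z l) = (j == l)%:R) ->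
  \dim W = kap -> W = <<Z>>%VS.
Proof.
move=> ZW Z_on dimW; apply/eqP; rewrite eq_sym eqEdim (introT span_subvP ZW) /=.
suff /eqP -> : free Z by rewrite size_tuple dimW.
apply/freeP => a a0 j.
have := congr1 (dotv (tnth Z j)) a0; rewrite dotv_sumr dotv0r.
by under eq_bigr do rewrite dotvZr -tnth_nth Z_on mulrC; rewrite sumr_delta.
Qed.

Lemma span_mulmx_sub k l (T : 'M[R]_(l, k)) (s t : seq 'cV[R]_k) :
  (<<s>> <= <<t>>)%VS -> (<<map (mulmx T) s>> <= <<map (mulmx T) t>>)%VS.
Proof.
have linT r : map (mulmx T) r = map (linfun (mulmx T)) r.
  by apply: eq_map => u; rewrite lfunE.
by move=> st; rewrite !linT -!limg_span limgS.
Qed.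

Lemma span_filter_none (T : finType) (vT : vectType R) (F : T -> vT) (X : {set T})
    (f : pred T) :
  ~~ [exists x in X, f x] -> <<[seq F x | x <- enum X & f x]>>%VS = 0%VS.
Proof.
move=> no_fx; rewrite (@eq_in_filter _ f pred0) ?filter_pred0 ?span_nil // => z.
rewrite mem_enum => zX; apply/negbTE; apply: contra no_fx => fz.
by apply/exists_inP; exists z.
Qed.

Lemma orth_proj0 k (P : 'M[R]_k) (u : 'cV[R]_k) : orth_proj 0%VS P -> P *m u = 0.
Proof. by move=> /(_ u) [+ _]; rewrite memv0 => /eqP. Qed.

Lemma orth_proj_dotv_le k (W : {vspace 'cV[R]_k}) (P : 'M[R]_k) kap
    (Z : kap.-tuple 'cV[R]_k) (u : 'cV[R]_k) delta B :
  orth_proj W P -> (W <= <<Z>>)%VS ->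
  (forall j l, `|dotv (tnth Z j) (tnth Z l) - (j == l)%:R| <= delta) ->
  (forall j, `|dotv (tnth Z j) u| <= B) ->
  3%:R * delta * kap%:R <= 1 -> 0 <= delta -> 0 <= B ->
  dotv (P *m u) (P *m u) <= 3%:R / 2%:R * kap%:R * B ^+ 2.
Proof.
move=> /(_ u) [pW p_orth] WZ Z_gram Z_u small delta0 B0.
set p := P *m u in pW p_orth *.
have pZ : p \in <<Z>>%VS by apply: subvP WZ _ pW.
pose beta j := coord Z j p.
have p_sum : p = \sum_j beta j *: tnth Z j.
  by rewrite {1}(coord_span pZ); apply: eq_bigr => j _; rewrite -tnth_nth.
have pp_pu : dotv p p = dotv p u by apply/eqP; rewrite eq_sym -subr_eq0 -dotvBr p_orth.
have pu_le : dotv p u <= (\sum_j `|beta j|) * B.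
  rewrite {1}p_sum dotv_suml mulr_suml; apply: ler_sum => j _.
  rewrite dotvZl; apply: le_trans (ler_norm _) _.
  by rewrite normrM ler_wpM2l.
have pp_ge : \sum_j beta j ^+ 2 - delta * (\sum_j `|beta j|) ^+ 2 <= dotv p p.
  suff -> : dotv p p = \sum_j \sum_l beta j * beta l * dotv (tnth Z j) (tnth Z l).
    exact: quad_form_ge.
  rewrite {1}p_sum dotv_suml; apply: eq_bigr => j _.
  rewrite dotvZl p_sum dotv_sumr mulr_sumr; apply: eq_bigr => l _.
  by rewrite dotvZr mulrA.
have cs : (\sum_j `|beta j|) ^+ 2 <= kap%:R * \sum_j beta j ^+ 2.
  rewrite [X in _ * X](eq_bigr (fun j => `|beta j| ^+ 2)) => [|j _].
    exact: sqr_sum_le.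
  by rewrite real_normK ?num_real.
apply: gram_bound_arith pp_ge cs small _ B0 (ler0n _ _) delta0.
- by rewrite pp_pu.
- by apply: sumr_ge0 => j _; apply: normr_ge0.
Qed.

End GramProjection.

Section SketchedSpan.
Variables (R : realType) (n m N : nat) (X : {set bitstr n}) (f : bitstr n -> bool).
Variables (c A : R) (v : bitstr n -> 'I_n -> 'cV[R]_m) (kappa : nat).
Variables (alpha : 'I_kappa -> bitstr n -> R) (eps : R) (S : 'M[R]_(N, m)).

Local Notation s := (Num.sqrt (c * A)).
Local Notation zeta j := (\sum_(x in X | f x) alpha j x *: psi c A v x).
Local Notation C j i b := (Cvec c A v X f (alpha j) i b).
Local Notation inV u := ((exists j i b, u = C j i b) \/
                         (exists y i, [/\ y \in X, f y = false & u = v y i])).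

Hypotheses (c_gt0 : 0 < c) (A_gt0 : 0 < A) (eps_ge0 : 0 <= eps).
Hypothesis A_ge : forall y, y \in X -> \sum_i dotv (v y i) (v y i) <= A.
Hypothesis zeta_on : forall j k, dotv (zeta j) (zeta k) = (j == k)%:R.
Hypothesis S_near : forall u w, (inV u \/ u = 0) -> (inV w \/ w = 0) ->
  near_isometry S eps u w.

Let cA_gt0 : 0 < c * A. Proof. exact: mulr_gt0. Qed.
Let s_neq0 : s != 0. Proof. by rewrite gt_eqF // sqrtr_gt0. Qed.

Lemma zeta_hvec j :
  zeta j = hvec (\sum_(x in X | f x) alpha j x / Num.sqrt (nu c A v x))
                (fun i b => s^-1 *: C j i b).
Proof. exact: sum_psi_hvec. Qed.

Lemma dotv_S_distortion u w p q : inV u -> inV w ->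
  `|dotv (S *m (p *: u)) (S *m (q *: w)) - dotv (p *: u) (q *: w)| <=
  `|p * q| * (2 * eps * (dotv u u + dotv w w)).
Proof.
move=> Vu Vw; rewrite -!scalemxAr !dotvZl !dotvZr !(mulrA p q) -mulrBr normrM ler_wpM2l //.
by apply: near_isometry_dotv => //; apply: S_near; by [left | right].
Qed.

Lemma sum_dotv_C_le j : \sum_i \sum_b dotv (C j i b) (C j i b) <= c * A.
Proof.
have := sum_dotv_le_hvec (\sum_(x in X | f x) alpha j x / Num.sqrt (nu c A v x))
                         (fun i b => s^-1 *: C j i b).
rewrite -zeta_hvec zeta_on eqxx.
suff -> : \sum_i \sum_b dotv (s^-1 *: C j i b) (s^-1 *: C j i b) =
          (\sum_i \sum_b dotv (C j i b) (C j i b)) / (c * A).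
  by rewrite ler_pdivrMr // mul1r.
rewrite mulr_suml; apply: eq_bigr => i _; rewrite mulr_suml; apply: eq_bigr => b _.
by rewrite dotvZl dotvZr mulrA -invfM -expr2 sqr_sqrtr ?(ltW cA_gt0) // mulrC.
Qed.

Lemma gram_Tzeta j l :
  `|dotv (@Tmap R n m N S *m zeta j) (@Tmap R n m N S *m zeta l) - (j == l)%:R|
    <= 4%:R * eps.
Proof.
have inC j' i b : inV (C j' i b) by left; exists j', i, b.
have s2 : `|s^-1 * s^-1| = (c * A)^-1.
  by rewrite -invfM -expr2 sqr_sqrtr ?ger0_norm ?invr_ge0 // ltW.
rewrite -zeta_on !zeta_hvec dotv_Tmap_hvecB.
apply: le_trans (_ : _ <= 2 * eps / (c * A) *
  (\sum_i \sum_b dotv (C j i b) (C j i b) + \sum_i \sum_b dotv (C l i b) (C l i b))) _.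
  rewrite -big_split mulr_sumr; apply: le_trans (ler_norm_sum _ _ _) _.
  apply: ler_sum => i _; rewrite -big_split mulr_sumr.
  apply: le_trans (ler_norm_sum _ _ _) _; apply: ler_sum => b _ /=.
  apply: le_trans (dotv_S_distortion _ _ (inC j i b) (inC l i b)) _.
  by rewrite s2 le_eqVlt; apply/orP; left; apply/eqP; ring.
apply: le_trans (ler_wpM2l _ (lerD (sum_dotv_C_le j) (sum_dotv_C_le l))) _.
  by rewrite mulr_ge0 ?invr_ge0 ?(ltW cA_gt0) // mulr_ge0.
by rewrite le_eqVlt; apply/orP; left; apply/eqP; field; rewrite !gt_eqF.
Qed.

Lemma dotv_Tzeta_phi (dec : deciding X f v) j y : y \in X -> f y = false ->
  `|dotv (@Tmap R n m N S *m zeta j) (@Tmap R n m N S *m phi c A v y)|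
    <= 2 * eps * ((c + 1) * A).
Proof.
move=> yX fy.
have inC i b : inV (C j i b) by left; exists j, i, b.
have inVy i : inV (v y i) by right; exists y, i.
have zeta_phi : dotv (zeta j) (phi c A v y) = 0.
  rewrite dotv_suml big1 // => x /andP[xX fx].
  by rewrite dotvZl (dotv_psi_phi cA_gt0 dec) ?fy ?mulr0.
set mm := (Num.sqrt (mu c A v y))^-1.
have mm_ge0 : 0 <= mm by rewrite invr_ge0 sqrtr_ge0.
have mm_le1 : mm <= 1.
  have mu_ge1 := mu_ge1 c A v y.
  have mu_gt0 : 0 < mu c A v y by apply: lt_le_trans mu_ge1.
  by rewrite invf_le1 ?sqrtr_gt0 // -{1}sqrtr1 ler_sqrt // ltW.
rewrite -[dotv (_ *m _) _]subr0 -zeta_phi zeta_hvec phi_hvec -/mm dotv_Tmap_hvecB.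
apply: le_trans (_ : _ <= 2 * eps * (\sum_i \sum_b dotv (C j i b) (C j i b) +
    \sum_i \sum_b (~~ y i == b)%:R * dotv (v y i) (v y i))) _.
  rewrite -big_split mulr_sumr; apply: le_trans (ler_norm_sum _ _ _) _.
  apply: ler_sum => i _; rewrite -big_split mulr_sumr.
  apply: le_trans (ler_norm_sum _ _ _) _; apply: ler_sum => b _ /=.
  apply: le_trans (dotv_S_distortion _ _ (inC i b) (inVy i)) _.
  have -> : s^-1 * (mm * - ((~~ y i == b)%:R * s)) = - (mm * (~~ y i == b)%:R).
    by field.
  rewrite normrN ger0_norm ?mulr_ge0 //.
  have H_ge0 := dotv_ge0 (C j i b); have V_ge0 := dotv_ge0 (v y i).
  case: (~~ y i == b); rewrite ?mulr1 ?mul1r ?mulr0 ?mul0r ?addr0.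
    by rewrite ler_piMl // !mulr_ge0 ?addr_ge0 //; lra.
  by rewrite !mulr_ge0 //; lra.
under [X in _ + X]eq_bigr do rewrite sumr_delta.
apply: le_trans (ler_wpM2l _ (lerD (sum_dotv_C_le j) (A_ge yX))) _.
  by rewrite mulr_ge0.
by rewrite [(c + 1) * A]mulrDl mul1r.
Qed.

Lemma span_Tpsi_sub : kappa = \dim (psi_span X f c A v) ->
  (<<[seq @Tmap R n m N S *m psi c A v x | x <- enum X & f x]>> <=
   <<[tuple @Tmap R n m N S *m zeta j | j < kappa]>>)%VS.
Proof.
move=> kappaE.
have -> : [seq @Tmap R n m N S *m psi c A v x | x <- enum X & f x] =
          map (mulmx (Tmap S)) [seq psi c A v x | x <- enum X & f x] by rewrite -map_comp.
have -> : val [tuple @Tmap R n m N S *m zeta j | j < kappa] =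
          map (mulmx (Tmap S)) [tuple zeta j | j < kappa] by rewrite -map_comp.
apply: span_mulmx_sub.
rewrite -(span_orthonormal (W := psi_span X f c A v)) ?subvv ?kappaE //.
  move=> _ /mapP[j _ ->]; apply: memv_suml => x /andP[xX fx].
  by rewrite memvZ // memv_span // map_f // mem_filter fx mem_enum.
by move=> j l; rewrite !tnth_mktuple.
Qed.

End SketchedSpan.

Theorem lemma13 (R : realType) (n m N : nat) (X : {set bitstr n})
  (f : bitstr n -> bool) (c : R) (v : bitstr n -> 'I_n -> 'cV[R]_m)
  (kappa : nat) (alpha : 'I_kappa -> bitstr n -> R) (eps : R) (S : 'M[R]_(N, m))
  (P : 'M[R]_(1 + n * N * 2)) :
  0 < c ->
  deciding X f v ->
  let A := vsize X v in
  kappa = \dim (psi_span X f c A v) ->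
  (* zeta_j = sum_x alpha_{j,x} psi_x is an orthonormal family (hence an
     orthonormal basis of the kappa-dimensional span) *)
  let zeta j := \sum_(x in X | f x) alpha j x *: psi c A v x in
  (forall j k, dotv (zeta j) (zeta k) = (j == k)%:R) ->
  let C j i b := \sum_(x in X | f x && (x i == b))
                   (alpha j x / Num.sqrt (nu c A v x)) *: v x i in
  let inV (u : 'cV[R]_m) :=
    (exists j i b, u = C j i b) \/
    (exists y i, [/\ y \in X, f y = false & u = v y i]) in
  0 < eps ->
  (forall u w, (inV u \/ u = 0) -> (inV w \/ w = 0) ->
     (1 - eps) * normv (u - w) ^+ 2 <= normv (S *m u - S *m w) ^+ 2 /\
     normv (S *m u - S *m w) ^+ 2 <= (1 + eps) * normv (u - w) ^+ 2) ->
  let T := @Tmap R n m N S in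
  let psi' x := T *m psi c A v x in
  let phi' x := T *m phi c A v x in
  orth_proj <<[seq psi' x | x <- enum X & f x]>>%VS P ->
  let Rf := 2%:R *: P - 1%:M in
  eps * kappa%:R < 1 / 12%:R ->
  forall x, x \in X -> f x = false ->
    normv ((1%:M + Rf) *m phi' x) <= 8%:R * eps * (c + 1) * A * Num.sqrt kappa%:R.
Proof.
move=> c_gt0 dec A kappaE zeta zeta_on C inV eps_gt0 S_near T psi' phi' P_proj Rf
  small y yX fy.
have A_ge0 : 0 <= A := vsize_ge0 X v.
have eps_ge0 : 0 <= eps := ltW eps_gt0.
have bound_ge0 : 0 <= 8%:R * eps * (c + 1) * A * Num.sqrt kappa%:R.
  by rewrite !mulr_ge0 ?sqrtr_ge0 ?addr_ge0 ?(ltW c_gt0).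
rewrite /Rf addrC subrK -scalemxAl; apply: normv_le bound_ge0 _; rewrite dotvZl dotvZr.
have [/exists_inP[x xX fx] | no_fx] := boolP [exists x in X, f x]; last first.
  (* Here the span is trivial, and A may vanish, making 1/sqrt(c A) a junk value. *)
  move: P_proj; rewrite span_filter_none // => /(orth_proj0 (phi' y)) ->.
  by rewrite dotv0l !mulr0 sqr_ge0.
have A_gt0 : 0 < A by apply: vsize_gt0 dec xX yX _; rewrite fx fy.
have pp_le : dotv (P *m phi' y) (P *m phi' y) <=
    3%:R / 2%:R * kappa%:R * (2 * eps * ((c + 1) * A)) ^+ 2.
  have W_sub := span_Tpsi_sub S zeta_on kappaE.
  apply: (orth_proj_dotv_le (delta := 4%:R * eps)) P_proj W_sub _ _ _ _ _.
  - by move=> j l; rewrite !tnth_mktuple; apply: gram_Tzeta.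
  - move=> j; rewrite tnth_mktuple; apply: dotv_Tzeta_phi => //.
    by move=> z; apply: sum_dotv_le_vsize.
  - lra.
  - lra.
  - by rewrite !mulr_ge0 ?addr_ge0 ?(ltW c_gt0).
have Y_ge0 : 0 <= kappa%:R * (eps * (c + 1) * A) ^+ 2 by rewrite mulr_ge0 ?sqr_ge0.
move: pp_le Y_ge0; rewrite !exprMn sqr_sqrtr ?ler0n //; lra.
Qed.
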